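(* Let $(\mathcal{T},[1],\Delta)$ be a triangulated category, let $\mathcal{N}$ be a triangulated subcategory of $\mathcal{T}$, and let $(\mathcal{U},\mathcal{X},\mathcal{V})$ be an $\mathcal{N}$-localization triple in $\mathcal{T}$. (i) If $\mathcal{U}\cap\mathcal{V}$ is a Frobenius special $\mathcal{X}$-monic closed subcategory of $\mathcal{T}$, then $(\mathcal{U},\mathcal{X},\mathcal{V})$ satisfies the Verdier condition. (ii) If $\mathcal{U}\cap\mathcal{V}$ is a Frobenius special $\mathcal{X}$-epic closed subcategory of $\mathcal{T}$, then $(\mathcal{U},\mathcal{X},\mathcal{V})$ satisfies the Verdier condition.
   Context: $\Delta$ denotes the class of distinguished triangles of $\mathcal{T}$. All subcategories are full, additive and closed under isomorphisms. For additive subcategories $\mathcal{X}\subseteq\mathcal{C}$ of $\mathcal{T}$, the factor category $\mathcal{C}/[\mathcal{X}]$ has the objects of $\mathcal{C}$ and $\mathrm{Hom}_{\mathcal{C}/[\mathcal{X}]}(A,B)=\mathrm{Hom}_{\mathcal{T}}(A,B)/\mathcal{X}(A,B)$, where $\mathcal{X}(A,B)$ consists of the morphisms factoring through an object of $\mathcal{X}$; $\underline{f}$ denotes the class of $f$. For a subcategory $\mathcal{Y}$, a morphism $f\colon A\to B$ is $\mathcal{Y}$-monic if $\mathrm{Hom}_{\mathcal{T}}(B,Y)\to\mathrm{Hom}_{\mathcal{T}}(A,Y)$, $g\mapsto gf$, is surjective for all $Y\in\mathcal{Y}$, and $\mathcal{Y}$-epic dually; a $\mathcal{Y}$-preenvelope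 of $A$ is a $\mathcal{Y}$-monic $A\to Y$ with $Y\in\mathcal{Y}$, and a $\mathcal{Y}$-precover of $A$ is a $\mathcal{Y}$-epic $Y\to A$ with $Y\in\mathcal{Y}$. Special $\mathcal{X}$-monic closed: an additive subcategory $\mathcal{C}\supseteq\mathcal{X}$ such that (a) for every $A\in\mathcal{C}$ there is a triangle $A\xrightarrow{i}X\to U\to A[1]$ in $\Delta$ with $U\in\mathcal{C}$ and $i$ an $\mathcal{X}$-preenvelope; (b) whenever $A\xrightarrow{i}X\to U\to A[1]$ is in $\Delta$ with $A,U\in\mathcal{C}$ and $i$ an $\mathcal{X}$-preenvelope, then for every morphism $f\colon A\to B$ in $\mathcal{C}$ there is a triangle $A\xrightarrow{\binom{i}{f}}X\oplus B\to N\to A[1]$ in $\Delta$ with $N\in\mathcal{C}$. Special $\mathcal{X}$-epic closed is the dual notion: $\mathcal{X}\subseteq\mathcal{C}$, every $A\in\mathcal{C}$ admits a triangle $U\to X\xrightarrow{\pi}A\to U[1]$ in $\Delta$ with $U\in\mathcal{C}$ and $\pi$ an $\mathcal{X}$-precover, and for any such triangle and any morphism $f\colon B\to A$ in $\mathcal{C}$ there is a triangle $N\to X\oplus B\xrightarrow{(\pi\ f)}A\to N[1]$ in $\Delta$ with $N\in\mathcal{C}$. A special $\mathcal{X}$-monic closed $\mathcal{C}$ is Frobenius if (a) for each $A\in\mathcal{C}$ there is a triangle $K\xrightarrow{u}X\xrightarrow{v}A\to K[1]$ in $\Delta$ with $K\in\mathcal{C}$ and $u$ an $\mathcal{X}$-preenvelope,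 and (b) for each $A\in\mathcal{C}$ the triangle $A\xrightarrow{i^A}X^A\xrightarrow{p^A}U^A\to A[1]$ of (a) in the definition of special $\mathcal{X}$-monic closed (chosen and fixed for each $A$) has $p^A$ an $\mathcal{X}$-precover. Dually, a special $\mathcal{X}$-epic closed $\mathcal{C}$ is Frobenius if for each $A\in\mathcal{C}$ there is a triangle $A\xrightarrow{}X\xrightarrow{v}K\to A[1]$ in $\Delta$ with $K\in\mathcal{C}$ and $v$ an $\mathcal{X}$-precover, and the fixed triangles $U_A\xrightarrow{\iota_A}X_A\xrightarrow{\pi_A}A\to U_A[1]$ ($\pi_A$ an $\mathcal{X}$-precover, $U_A\in\mathcal{C}$) have $\iota_A$ an $\mathcal{X}$-preenvelope. For additive subcategories $\mathcal{U},\mathcal{V}\supseteq\mathcal{X}$ of an additive subcategory $\mathcal{A}$, put $\mathcal{U}^{\perp_{\mathcal{A}/[\mathcal{X}]}}=\{W\in\mathcal{A}:\mathrm{Hom}_{\mathcal{A}/[\mathcal{X}]}(\mathcal{U},W)=0\}$ and ${}^{\perp_{\mathcal{A}/[\mathcal{X}]}}\mathcal{V}=\{W\in\mathcal{A}:\mathrm{Hom}_{\mathcal{A}/[\mathcal{X}]}(W,\mathcal{V})=0\}$. A triple $(\mathcal{U},\mathcal{X},\mathcal{V})$ with $\mathcal{X}\subseteq\mathcal{U}\cap\mathcal{V}$ and $\mathcal{U},\mathcal{V}\subseteq\mathcal{A}$ is a localization triple of $\mathcal{A}$ if: (a) each $A\in\mathcal{A}$ admits a triangle $A[-1]\to W_A\to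 Q(A)\xrightarrow{r_A}A$ in $\Delta$ with $r_A$ a $\mathcal{U}$-precover and $W_A\in\mathcal{U}^{\perp_{\mathcal{A}/[\mathcal{X}]}}$; (b) each $A\in\mathcal{A}$ admits a triangle $A\xrightarrow{j^A}R(A)\to W^A\to A[1]$ in $\Delta$ with $j^A$ a $\mathcal{V}$-preenvelope and $W^A\in{}^{\perp_{\mathcal{A}/[\mathcal{X}]}}\mathcal{V}$; (c) if $A\in\mathcal{V}$ then $Q(A)\in\mathcal{U}\cap\mathcal{V}$ and $W_A\in(\mathcal{U}\cap\mathcal{V})^{\perp_{\mathcal{V}/[\mathcal{X}]}}$, and if $A\in\mathcal{U}$ then $R(A)\in\mathcal{U}\cap\mathcal{V}$ and $W^A\in{}^{\perp_{\mathcal{U}/[\mathcal{X}]}}(\mathcal{U}\cap\mathcal{V})$. A localization triple $(\mathcal{U},\mathcal{X},\mathcal{V})$ of $\mathcal{T}$ is an $\mathcal{N}$-localization triple if $\mathcal{X}=\mathcal{U}\cap\mathcal{V}\cap\mathcal{N}$ and $\mathcal{U}^{\perp_{\mathcal{T}/[\mathcal{X}]}}\subseteq\mathcal{N}$, ${}^{\perp_{\mathcal{T}/[\mathcal{X}]}}\mathcal{V}\subseteq\mathcal{N}$. It satisfies the Verdier condition if for every triangle $A\xrightarrow{s}B\to N\to A[1]$ in $\Delta$ with $A,B\in\mathcal{U}\cap\mathcal{V}$ and $N\in\mathcal{N}$, the class $\underline{s}$ is an isomorphism in $(\mathcal{U}\cap\mathcal{V})/[\mathcal{X}]$. *)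

From HB Require Import structures.
From mathcomp Require Import all_boot all_algebra.
Set Implicit Arguments. Unset Strict Implicit. Unset Printing Implicit Defensive.
Import GRing.Theory.
Local Open Scope ring_scope.

(* Data of a preadditive category with zero object, chosen biproducts,
   a shift functor [1] and a class Delta of distinguished triangles
   A --u--> B --v--> C --w--> A[1]. *)
Record PreTri := {
  Ob : Type;
  Hom : Ob -> Ob -> zmodType;
  comp : forall A B C : Ob, Hom B C -> Hom A B -> Hom A C;
  idm : forall A : Ob, Hom A A;
  sh : Ob -> Ob;
  shm : forall A B : Ob, Hom A B -> Hom (sh A) (sh B);
  zo : Ob;
  bp : Ob -> Ob -> Ob;
  bin1 : forall A B : Ob, Hom A (bp A B);
  bin2 : forall A B : Ob, Hom B (bp A B);
  bpr1 : forall A B : Ob, Hom (bp A B) A;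
  bpr2 : forall A B : Ob, Hom (bp A B) B;
  Dist : forall A B C : Ob, Hom A B -> Hom B C -> Hom C (sh A) -> Prop
}.

Arguments Hom {p}.
Arguments comp {p A B C}.
Arguments idm {p}.
Arguments sh {p}.
Arguments shm {p A B}.
Arguments zo {p}.
Arguments bp {p}.
Arguments bin1 {p A B}.
Arguments bin2 {p A B}.
Arguments bpr1 {p A B}.
Arguments bpr2 {p A B}.
Arguments Dist {p A B C}.

Section TriAx.
Variable T : PreTri.
Local Notation "g \oo f" := (comp g f) (at level 40, left associativity).

Definition is_iso (A B : Ob T) (f : Hom A B) :=
  exists g : Hom B A, g \oo f = idm A /\ f \oo g = idm B.
Definition iso_ob (A B : Ob T) := exists f : Hom A B, is_iso f.

Definition preadd_ax :=
  [/\ (forall (A B C D : Ob T) (h : Hom C D) (g : Hom B C) (f : Hom A B),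
         h \oo (g \oo f) = (h \oo g) \oo f),
      (forall (A B : Ob T) (f : Hom A B), idm B \oo f = f),
      (forall (A B : Ob T) (f : Hom A B), f \oo idm A = f),
      (forall (A B C : Ob T) (g g' : Hom B C) (f : Hom A B),
         (g + g') \oo f = g \oo f + g' \oo f) &
      (forall (A B C : Ob T) (g : Hom B C) (f f' : Hom A B),
         g \oo (f + f') = g \oo f + g \oo f')].

Definition zero_ax :=
  (forall (A : Ob T) (f : Hom A zo), f = 0) /\
  (forall (A : Ob T) (f : Hom zo A), f = 0).

Definition biprod_ax :=
  forall A B : Ob T,
  [/\ bpr1 \oo (@bin1 T A B) = idm A,
      bpr2 \oo (@bin2 T A B) = idm B,
      bpr1 \oo (@bin2 T A B) = 0,
      bpr2 \oo (@bin1 T A B) = 0 &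
      bin1 \oo bpr1 + bin2 \oo bpr2 = idm (bp A B)].

Definition shift_ax :=
  [/\ (forall A : Ob T, shm (idm A) = idm (sh A)),
      (forall (A B C : Ob T) (g : Hom B C) (f : Hom A B),
         shm (g \oo f) = shm g \oo shm f),
      (forall (A B : Ob T) (f g : Hom A B), shm (f + g) = shm f + shm g),
      (forall A B : Ob T, bijective (@shm T A B)) &
      (forall B : Ob T, exists A : Ob T, iso_ob (sh A) B)].

Definition TR1 :=
  [/\ (forall (A B C A' B' C' : Ob T)
          (u : Hom A B) (v : Hom B C) (w : Hom C (sh A))
          (u' : Hom A' B') (v' : Hom B' C') (w' : Hom C' (sh A'))
          (a : Hom A A') (b : Hom B B') (c : Hom C C'),
          is_iso a -> is_iso b -> is_iso c ->
          b \oo u = u' \oo a -> c \oo v = v' \oo b -> shm a \oo w = w' \oo c ->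
          Dist u v w -> Dist u' v' w'),
      (forall A : Ob T, Dist (idm A) (0 : Hom A zo) (0 : Hom zo (sh A))) &
      (forall (A B : Ob T) (u : Hom A B),
          exists C (v : Hom B C) (w : Hom C (sh A)), Dist u v w)].

Definition TR2 :=
  forall (A B C : Ob T) (u : Hom A B) (v : Hom B C) (w : Hom C (sh A)),
    Dist u v w <-> Dist v w (- shm u).

Definition TR3 :=
  forall (A B C A' B' C' : Ob T)
         (u : Hom A B) (v : Hom B C) (w : Hom C (sh A))
         (u' : Hom A' B') (v' : Hom B' C') (w' : Hom C' (sh A'))
         (a : Hom A A') (b : Hom B B'),
    Dist u v w -> Dist u' v' w' -> b \oo u = u' \oo a ->
    exists c : Hom C C', c \oo v = v' \oo b /\ shm a \oo w = w' \oo c.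

Definition TR4 :=
  forall (X Y Z Z' X' Y' : Ob T)
         (u : Hom X Y) (j : Hom Y Z') (k : Hom Z' (sh X))
         (v : Hom Y Z) (l : Hom Z X') (i : Hom X' (sh Y))
         (m : Hom Z Y') (n : Hom Y' (sh X)),
    Dist u j k -> Dist v l i -> Dist (v \oo u) m n ->
    exists (f : Hom Z' Y') (g : Hom Y' X'),
      [/\ Dist f g (shm j \oo i),
          f \oo j = m \oo v, n \oo f = k,
          g \oo m = l & i \oo g = shm u \oo n].

End TriAx.

Record TriCat := {
  PT :> PreTri;
  tc_preadd : preadd_ax PT;
  tc_zero : zero_ax PT;
  tc_biprod : biprod_ax PT;
  tc_shift : shift_ax PT;
  tc_TR1 : TR1 PT;
  tc_TR2 : TR2 PT;
  tc_TR3 : TR3 PT;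
  tc_TR4 : TR4 PT
}.

Section Notions.
Variable T : TriCat.
Local Notation "g \oo f" := (comp g f) (at level 40, left associativity).
Local Notation Obj := (Ob (PT T)).

Definition addsub (P : Obj -> Prop) :=
  [/\ P zo, (forall A B, P A -> P B -> P (bp A B)) &
      (forall A B, iso_ob A B -> P A -> P B)].

Definition tri_sub (N : Obj -> Prop) :=
  [/\ addsub N, (forall A, N A <-> N (sh A)) &
      (forall (A B C : Obj) (u : Hom A B) (v : Hom B C) (w : Hom C (sh A)),
         Dist u v w -> N A -> N B -> N C)].

(* f belongs to X(A,B): factors through an object of X *)
Definition factors (X : Obj -> Prop) (A B : Obj) (f : Hom A B) :=
  exists (Y : Obj) (g : Hom A Y) (h : Hom Y B), X Y /\ f = h \oo g.

(* Hom_{A/[X]}(P, W) = 0 with W in A : W in P^{perp_{A/[X]}} *)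
Definition rperp (Amb P X : Obj -> Prop) (W : Obj) :=
  Amb W /\ forall Y, P Y -> forall f : Hom Y W, factors X f.
(* Hom_{A/[X]}(W, P) = 0 with W in A : W in ^{perp_{A/[X]}}P *)
Definition lperp (Amb P X : Obj -> Prop) (W : Obj) :=
  Amb W /\ forall Y, P Y -> forall f : Hom W Y, factors X f.

Definition monic (Y : Obj -> Prop) (A B : Obj) (f : Hom A B) :=
  forall Z, Y Z -> forall g : Hom A Z, exists h : Hom B Z, h \oo f = g.
Definition epic (Y : Obj -> Prop) (A B : Obj) (f : Hom A B) :=
  forall Z, Y Z -> forall g : Hom Z B, exists h : Hom Z A, f \oo h = g.
Definition preenvelope (Y : Obj -> Prop) (A B : Obj) (f : Hom A B) :=
  Y B /\ monic Y f.
Definition precover (Y : Obj -> Prop) (A B : Obj) (f : Hom A B) :=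
  Y A /\ epic Y f.

(* the class of s is an isomorphism in the factor category modulo [X] *)
Definition iso_mod (X : Obj -> Prop) (A B : Obj) (s : Hom A B) :=
  exists t : Hom B A, factors X (t \oo s - idm A) /\ factors X (s \oo t - idm B).

Definition colpair (A X B : Obj) (i : Hom A X) (f : Hom A B) : Hom A (bp X B) :=
  bin1 \oo i + bin2 \oo f.
Definition rowpair (A X B : Obj) (p : Hom X A) (f : Hom B A) : Hom (bp X B) A :=
  p \oo bpr1 + f \oo bpr2.

Definition special_monic_closed (X C : Obj -> Prop) :=
  [/\ (forall Z, X Z -> C Z),
      (forall A, C A -> exists (X0 U0 : Obj) (i : Hom A X0) (p : Hom X0 U0)
                               (q : Hom U0 (sh A)),
          [/\ Dist i p q, C U0 & preenvelope X i]) &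
      (forall (A X0 U0 : Obj) (i : Hom A X0) (p : Hom X0 U0) (q : Hom U0 (sh A)),
          Dist i p q -> C A -> C U0 -> preenvelope X i ->
          forall (B : Obj) (f : Hom A B), C B ->
          exists (N0 : Obj) (g : Hom (bp X0 B) N0) (h : Hom N0 (sh A)),
            Dist (colpair i f) g h /\ C N0)].

Definition special_epic_closed (X C : Obj -> Prop) :=
  [/\ (forall Z, X Z -> C Z),
      (forall A, C A -> exists (U0 X0 : Obj) (j : Hom U0 X0) (p : Hom X0 A)
                               (q : Hom A (sh U0)),
          [/\ Dist j p q, C U0 & precover X p]) &
      (forall (A X0 U0 : Obj) (j : Hom U0 X0) (p : Hom X0 A) (q : Hom A (sh U0)),
          Dist j p q -> C A -> C U0 -> precover X p ->
          forall (B : Obj) (f : Hom B A), C B ->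
          exists (N0 : Obj) (g : Hom N0 (bp X0 B)) (h : Hom A (sh N0)),
            Dist g (rowpair p f) h /\ C N0)].

Definition frobenius_monic_closed (X C : Obj -> Prop) :=
  [/\ special_monic_closed X C,
      (forall A, C A -> exists (K X0 : Obj) (u : Hom K X0) (v : Hom X0 A)
                               (w : Hom A (sh K)),
          [/\ Dist u v w, C K & preenvelope X u]) &
      (forall A, C A -> exists (X0 U0 : Obj) (i : Hom A X0) (p : Hom X0 U0)
                               (q : Hom U0 (sh A)),
          [/\ Dist i p q, C U0, preenvelope X i & precover X p])].

Definition frobenius_epic_closed (X C : Obj -> Prop) :=
  [/\ special_epic_closed X C,
      (forall A, C A -> exists (X0 K : Obj) (u : Hom A X0) (v : Hom X0 K)
                               (w : Hom K (sh A)),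
          [/\ Dist u v w, C K & precover X v]) &
      (forall A, C A -> exists (U0 X0 : Obj) (j : Hom U0 X0) (p : Hom X0 A)
                               (q : Hom A (sh U0)),
          [/\ Dist j p q, C U0, precover X p & preenvelope X j])].

Definition all_ob (_ : Obj) := True.

Definition loc_triple (U X V : Obj -> Prop) :=
  let UV := fun Y => U Y /\ V Y in
  [/\ (forall Z, X Z -> UV Z),
      (forall A, exists (W Q : Obj) (s : Hom W Q) (r : Hom Q A) (t : Hom A (sh W)),
          [/\ Dist s r t, precover U r, rperp all_ob U X W &
              (V A -> UV Q /\ rperp V UV X W)]) &
      (forall A, exists (R W : Obj) (j : Hom A R) (p : Hom R W) (q : Hom W (sh A)),
          [/\ Dist j p q, preenvelope V j, lperp all_ob V X W &
              (U A -> UV R /\ lperp U UV X W)])].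

Definition N_loc_triple (N U X V : Obj -> Prop) :=
  [/\ loc_triple U X V,
      (forall Z, X Z <-> [/\ U Z, V Z & N Z]),
      (forall W, rperp all_ob U X W -> N W) &
      (forall W, lperp all_ob V X W -> N W)].

Definition verdier_cond (N U X V : Obj -> Prop) :=
  forall (A B C : Obj) (s : Hom A B) (g : Hom B C) (h : Hom C (sh A)),
    U A -> V A -> U B -> V B -> N C -> Dist s g h -> iso_mod X s.

End Notions.

(* In case (i), push s : A -> B out along the X-preenvelope i : A -> X0 of a
   Frobenius triangle A -> X0 -> U0 -> A[1], giving a triangle
   A -> X0 (+) B -> N0 -> A[1] with N0 in U ∩ V.  By the octahedral axiom N0
   lies in a triangle with the cone of s and X0[1], so N0 is in N, hence in
   X = U ∩ V ∩ N.  The connecting map N0 -> A[1] factors through U0 -> A[1],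
   and the map N0 -> U0 factors through the X-precover X0 -> U0, so the
   connecting map is zero and the triangle splits.  The retraction
   X0 (+) B -> A restricted to B inverts s up to maps factoring through X0 and
   N0.  Case (ii) is dual: pull s back along an X-precover of B. *)
From mathcomp Require Import all_boot all_algebra.
Set Implicit Arguments. Unset Strict Implicit. Unset Printing Implicit Defensive.
Import GRing.Theory.
Local Open Scope ring_scope.

Local Notation "g \oo f" := (comp g f) (at level 40, left associativity).

Section TriangulatedCalculus.
Variable T : TriCat.
Local Notation Obj := (Ob (PT T)).

Lemma compA (A B C D : Obj) (h : Hom C D) (g : Hom B C) (f : Hom A B) :
  h \oo (g \oo f) = h \oo g \oo f.
Proof. by case: (tc_preadd T) => compA _ _ _ _; apply: compA. Qed.

Lemma comp1l (A B : Obj) (f : Hom A B) : idm B \oo f = f.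
Proof. by case: (tc_preadd T) => _ comp1l _ _ _; apply: comp1l. Qed.

Lemma comp1r (A B : Obj) (f : Hom A B) : f \oo idm A = f.
Proof. by case: (tc_preadd T) => _ _ comp1r _ _; apply: comp1r. Qed.

Lemma compDl (A B C : Obj) (g g' : Hom B C) (f : Hom A B) :
  (g + g') \oo f = g \oo f + g' \oo f.
Proof. by case: (tc_preadd T) => _ _ _ compDl _; apply: compDl. Qed.

Lemma compDr (A B C : Obj) (g : Hom B C) (f f' : Hom A B) :
  g \oo (f + f') = g \oo f + g \oo f'.
Proof. by case: (tc_preadd T) => _ _ _ _ compDr; apply: compDr. Qed.

Lemma comp0l (A B C : Obj) (f : Hom A B) : (0 : Hom B C) \oo f = 0.
Proof. by apply: (@addrI _ ((0 : Hom B C) \oo f)); rewrite -compDl !addr0. Qed.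

Lemma comp0r (A B C : Obj) (g : Hom B C) : g \oo (0 : Hom A B) = 0.
Proof. by apply: (@addrI _ (g \oo (0 : Hom A B))); rewrite -compDr !addr0. Qed.

Lemma compNl (A B C : Obj) (g : Hom B C) (f : Hom A B) : (- g) \oo f = - (g \oo f).
Proof. by apply: (@addrI _ (g \oo f)); rewrite -compDl !addrN comp0l. Qed.

Lemma compNr (A B C : Obj) (g : Hom B C) (f : Hom A B) : g \oo (- f) = - (g \oo f).
Proof. by apply: (@addrI _ (g \oo f)); rewrite -compDr !addrN comp0r. Qed.

Lemma compBl (A B C : Obj) (g g' : Hom B C) (f : Hom A B) :
  (g - g') \oo f = g \oo f - g' \oo f.
Proof. by rewrite compDl compNl. Qed.

Lemma compBr (A B C : Obj) (g : Hom B C) (f f' : Hom A B) :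
  g \oo (f - f') = g \oo f - g \oo f'.
Proof. by rewrite compDr compNr. Qed.

Lemma shm1 (A : Obj) : shm (idm A) = idm (sh A).
Proof. by case: (tc_shift T) => shm1 _ _ _ _; apply: shm1. Qed.

Lemma shmM (A B C : Obj) (g : Hom B C) (f : Hom A B) :
  shm (g \oo f) = shm g \oo shm f.
Proof. by case: (tc_shift T) => _ shmM _ _ _; apply: shmM. Qed.

Lemma shmD (A B : Obj) (f g : Hom A B) : shm (f + g) = shm f + shm g.
Proof. by case: (tc_shift T) => _ _ shmD _ _; apply: shmD. Qed.

Lemma shm0 (A B : Obj) : shm (0 : Hom A B) = 0.
Proof. by apply: (@addrI _ (shm (0 : Hom A B))); rewrite -shmD !addr0. Qed.

Lemma shm_inj (A B : Obj) : injective (@shm T A B).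
Proof. by case: (tc_shift T) => _ _ _ shm_bij _; apply: bij_inj. Qed.

Lemma shm_surj (A B : Obj) (c : Hom (sh A) (sh B)) : exists f, shm f = c.
Proof.
by case: (tc_shift T) => _ _ _ shm_bij _; case: (shm_bij A B) => g _ gK; exists (g c).
Qed.

Lemma bpr1_colpair (A X0 B : Obj) (i : Hom A X0) (f : Hom A B) :
  bpr1 \oo colpair i f = i.
Proof.
have [b11 _ b12 _ _] := tc_biprod X0 B.
by rewrite compDr !compA b11 b12 comp0l comp1l addr0.
Qed.

Lemma bpr2_colpair (A X0 B : Obj) (i : Hom A X0) (f : Hom A B) :
  bpr2 \oo colpair i f = f.
Proof.
have [_ b22 _ b21 _] := tc_biprod X0 B.
by rewrite compDr !compA b21 b22 comp0l comp1l add0r.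
Qed.

Lemma rowpair_bin1 (A X0 B : Obj) (p : Hom X0 A) (f : Hom B A) :
  rowpair p f \oo bin1 = p.
Proof.
have [b11 _ _ b21 _] := tc_biprod X0 B.
by rewrite compDl -!compA b11 b21 comp0r comp1r addr0.
Qed.

Lemma rowpair_bin2 (A X0 B : Obj) (p : Hom X0 A) (f : Hom B A) :
  rowpair p f \oo bin2 = f.
Proof.
have [_ b22 b12 _ _] := tc_biprod X0 B.
by rewrite compDl -!compA b12 b22 comp0r comp1r add0r.
Qed.

Lemma is_iso_idm (A : Obj) : is_iso (idm A).
Proof. by exists (idm A); rewrite comp1l. Qed.

Lemma Dist_rot (A B C : Obj) (u : Hom A B) (v : Hom B C) (w : Hom C (sh A)) :
  Dist u v w -> Dist v w (- shm u).
Proof. exact: (proj1 (tc_TR2 u v w)). Qed.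

Lemma Dist_idm (A : Obj) : Dist (idm A) (0 : Hom A zo) (0 : Hom zo (sh A)).
Proof. by case: (tc_TR1 T). Qed.

Lemma Dist_comp0 (A B C : Obj) (u : Hom A B) (v : Hom B C) (w : Hom C (sh A)) :
  Dist u v w -> v \oo u = 0.
Proof.
move=> Huvw.
have [c [<- _]] := tc_TR3 (Dist_idm A) Huvw (a := idm A) (b := u) erefl.
exact: comp0r.
Qed.

Lemma Dist_shm_comp0 (A B C : Obj) (u : Hom A B) (v : Hom B C) (w : Hom C (sh A)) :
  Dist u v w -> shm u \oo w = 0.
Proof.
move=> /Dist_rot /Dist_rot /Dist_comp0 /eqP.
by rewrite compNl oppr_eq0 => /eqP.
Qed.

Lemma Dist_lift (A B C Z : Obj) (u : Hom A B) (v : Hom B C) (w : Hom C (sh A))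
    (f : Hom Z B) :
  Dist u v w -> v \oo f = 0 -> exists c, f = u \oo c.
Proof.
move=> Huvw vf0.
have [c [_]] := tc_TR3 (Dist_rot (Dist_idm Z)) (Dist_rot Huvw)
  (a := f) (b := 0 : Hom zo C) (ltac:(by rewrite comp0l vf0)).
rewrite shm1 compNr compNl comp1r => /oppr_inj.
have [c' <-] := shm_surj c.
by rewrite -shmM => /shm_inj ->; exists c'.
Qed.

Lemma Dist_retract_w0 (A B C : Obj) (u : Hom A B) (v : Hom B C) (w : Hom C (sh A))
    (r : Hom B A) :
  Dist u v w -> r \oo u = idm A -> w = 0.
Proof.
move=> Huvw ru1.
by rewrite -[w]comp1l -shm1 -ru1 shmM -compA (Dist_shm_comp0 Huvw) comp0r.
Qed.

Lemma Dist0_mono (A B C Z : Obj) (u : Hom A B) (v : Hom B C) (x : Hom Z A) :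
  Dist u v (0 : Hom C (sh A)) -> u \oo x = 0 -> x = 0.
Proof.
move=> Huv ux0.
have [c] := Dist_lift (f := shm x) (Dist_rot (Dist_rot Huv))
  (ltac:(by rewrite compNl -shmM ux0 shm0 oppr0)).
by rewrite comp0l -(shm0 Z A) => /shm_inj.
Qed.

Lemma Dist_split (A B C : Obj) (u : Hom A B) (v : Hom B C) :
  Dist u v (0 : Hom C (sh A)) ->
  exists (sg : Hom C B) (rho : Hom B A),
    [/\ v \oo sg = idm C, u \oo rho + sg \oo v = idm B & rho \oo u = idm A].
Proof.
move=> Huv.
have [sg sgE] := Dist_lift (f := idm C) (Dist_rot Huv) (comp0l _ _).
have vu0 := Dist_comp0 Huv.
have [rho rhoE] : exists rho, idm B - sg \oo v = u \oo rho.
  by apply: (Dist_lift Huv); rewrite compBr comp1r compA -sgE comp1l subrr.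
exists sg, rho; split; rewrite -?rhoE ?subrK //.
apply/eqP; rewrite -subr_eq0; apply/eqP; apply: (Dist0_mono Huv).
by rewrite compBr comp1r compA -rhoE compBl comp1l -compA vu0 comp0r subr0 subrr.
Qed.

Lemma split_Dist (P S Q : Obj) (e : Hom P S) (pi : Hom S Q) (e' : Hom Q S)
    (pi' : Hom S P) :
  pi' \oo e = idm P -> pi \oo e' = idm Q -> pi \oo e = 0 ->
  e \oo pi' + e' \oo pi = idm S -> Dist e pi (0 : Hom Q (sh P)).
Proof.
move=> pe1 pe'1 pe0 sum1.
case: (tc_TR1 T) => Dist_iso _ Dist_cone.
have [C [v [w Hevw]]] := Dist_cone _ _ e.
have w0 := Dist_retract_w0 Hevw pe1; rewrite {}w0 in Hevw.
have [sg [rho [vsg1 sumC _]]] := Dist_split Hevw.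
have ve0 := Dist_comp0 Hevw.
have pisgv : pi \oo sg \oo v = pi.
  rewrite -compA -[sg \oo v](addKr (e \oo rho)) sumC compDr compNr comp1r.
  by rewrite compA pe0 comp0l oppr0 add0r.
have iso_c : is_iso (pi \oo sg).
  exists (v \oo e'); split; last by rewrite compA pisgv pe'1.
  rewrite -compA (compA e') -[e' \oo pi](addKr (e \oo pi')) sum1.
  by rewrite compDl compDr compNl compNr !compA ve0 !comp0l oppr0 add0r comp1r vsg1.
apply: (Dist_iso _ _ _ _ _ _ e v 0 e pi 0 (idm P) (idm S) (pi \oo sg)) => //;
  rewrite ?comp1l ?comp1r ?comp0l ?comp0r //; exact: is_iso_idm.
Qed.

Lemma Dist_bin1 (A B : Obj) : Dist (@bin1 T A B) bpr2 0.
Proof.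
have [b11 b22 _ b21 bsum] := tc_biprod A B.
exact: (split_Dist b11 b22 b21 bsum).
Qed.

Lemma Dist_bin2 (A B : Obj) : Dist (@bin2 T A B) bpr1 0.
Proof.
have [b11 b22 b12 _ bsum] := tc_biprod A B.
by apply: (split_Dist b22 b11 b12); rewrite addrC.
Qed.

Lemma Dist_octahedral (A B C D E F : Obj)
    (u : Hom A B) (j : Hom B D) (k : Hom D (sh A))
    (v : Hom B C) (l : Hom C E) (i : Hom E (sh B))
    (m : Hom C F) (n : Hom F (sh A)) :
  Dist u j k -> Dist v l i -> Dist (v \oo u) m n ->
  exists (f : Hom D F) (g : Hom F E) (h : Hom E (sh D)), Dist f g h.
Proof.
move=> Hu Hv Hvu; have [f [g [Hfg _ _ _ _]]] := tc_TR4 Hu Hv Hvu.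
by exists f, g, (shm j \oo i).
Qed.

Lemma Dist_w0_of_epic (X : Obj -> Prop) (A B C B' C' : Obj)
    (u : Hom A B) (v : Hom B C) (w : Hom C (sh A))
    (u' : Hom A B') (v' : Hom B' C') (w' : Hom C' (sh A)) (b : Hom B B') :
  Dist u v w -> Dist u' v' w' -> b \oo u = u' -> epic X v' -> X C -> w = 0.
Proof.
move=> Huvw Huvw' bu epi_v' XC.
have [c [_]] := tc_TR3 Huvw Huvw' (a := idm A) (b := b) (ltac:(by rewrite comp1r)).
have [psi <-] := epi_v' C XC c.
by rewrite shm1 comp1l compA (Dist_comp0 (Dist_rot Huvw')) comp0l.
Qed.

Lemma Dist_w0_of_monic (X : Obj -> Prop) (A B C A' B' : Obj)
    (u : Hom A B) (v : Hom B C) (w : Hom C (sh A))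
    (u' : Hom A' B') (v' : Hom B' C) (w' : Hom C (sh A')) (b : Hom B B') :
  Dist u v w -> Dist u' v' w' -> v' \oo b = v -> monic X u -> X A' -> w' = 0.
Proof.
move=> Huvw Huvw' vb mono_u XA'.
have [c [cw _]] := tc_TR3 (Dist_rot Huvw) (Dist_rot Huvw') (a := b) (b := idm C)
  (ltac:(by rewrite comp1l)).
have [c0 c0E] := shm_surj c.
have [psi psiE] := mono_u A' XA' c0.
by rewrite -[w']comp1r -cw -c0E -psiE shmM -compA (Dist_shm_comp0 Huvw) comp0r.
Qed.

Lemma tri_sub_Dist_fst (N : Obj -> Prop) (A B C : Obj)
    (u : Hom A B) (v : Hom B C) (w : Hom C (sh A)) :
  tri_sub N -> Dist u v w -> N B -> N C -> N A.
Proof.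
move=> [_ Nsh Nclosed] Huvw NB NC.
by apply/Nsh; apply: (Nclosed _ _ _ _ _ _ (Dist_rot Huvw)).
Qed.

Section SplitPair.
Variables (X : Obj -> Prop) (A B X0 N0 : Obj).
Hypotheses (XX0 : X X0) (XN0 : X N0).

Lemma iso_mod_of_split_colpair (i : Hom A X0) (s : Hom A B)
    (g : Hom (bp X0 B) N0) (sg : Hom N0 (bp X0 B)) (rho : Hom (bp X0 B) A) :
  rho \oo colpair i s = idm A -> colpair i s \oo rho + sg \oo g = idm _ ->
  iso_mod X s.
Proof.
move=> rho_retr split_sum.
exists (rho \oo bin2); split.
  exists X0, i, (- (rho \oo bin1)); split => //.
  rewrite -compA; have -> : bin2 \oo s = colpair i s - bin1 \oo i.
    by rewrite /colpair addrAC subrr add0r.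
  by rewrite compBr rho_retr compNl compA addrAC subrr add0r.
exists N0, (g \oo bin2), (- (bpr2 \oo sg)); split => //.
have [_ b22 _ _ _] := tc_biprod X0 B.
have E : colpair i s \oo rho = idm _ - sg \oo g by rewrite -split_sum addrK.
rewrite -{1}(bpr2_colpair i s) -compA (compA (colpair i s)) E.
by rewrite compBl comp1l compBr b22 compNl !compA addrAC subrr add0r.
Qed.

Lemma iso_mod_of_split_rowpair (p : Hom X0 B) (s : Hom A B)
    (g : Hom N0 (bp X0 A)) (sg : Hom B (bp X0 A)) (rho : Hom (bp X0 A) N0) :
  rowpair p s \oo sg = idm B -> g \oo rho + sg \oo rowpair p s = idm _ ->
  iso_mod X s.
Proof.
move=> sg_sect split_sum.
exists (bpr2 \oo sg); split.
  exists N0, (rho \oo bin2), (- (bpr2 \oo g)); split => //.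
  have [_ b22 _ _ _] := tc_biprod X0 A.
  have E : sg \oo rowpair p s = idm _ - g \oo rho by rewrite -split_sum addrC addKr.
  rewrite -{1}(rowpair_bin2 p s) compA -(compA bpr2 sg) E.
  by rewrite compBr comp1r compBl b22 compNl !compA addrAC subrr add0r.
exists X0, (bpr1 \oo sg), (- p); split => //.
by rewrite -sg_sect compDl compNl !compA opprD addrCA subrr addr0.
Qed.

End SplitPair.

End TriangulatedCalculus.

Section Verdier.
Variables (T : TriCat) (N U X V : Ob (PT T) -> Prop).
Hypotheses (trisubN : tri_sub N) (XE : forall Z, X Z <-> [/\ U Z, V Z & N Z]).

Lemma X_N Z : X Z -> N Z.
Proof. by case/XE. Qed.

Lemma N_sh Z : N Z -> N (sh Z).
Proof. by case: trisubN => _ Nsh _ /Nsh. Qed.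

Lemma frobenius_monic_verdier :
  frobenius_monic_closed X (fun Y => U Y /\ V Y) -> verdier_cond N U X V.
Proof.
move=> [[_ _ Hpush] _ Hfrob] A B C s g h UA VA UB VB NC Hs.
have [X0 [U0 [i [p [q [Hi UVU0 env_i [_ cov_p]]]]]]] := Hfrob A (conj UA VA).
have [N0 [g' [h' [Hpush' [UN0 VN0]]]]] :=
  Hpush _ _ _ _ _ _ Hi (conj UA VA) UVU0 env_i B s (conj UB VB).
have XX0 := env_i.1.
have XN0 : X N0.
  apply/XE; split=> //.
  have Hs' : Dist (bpr2 \oo colpair i s) g h by rewrite bpr2_colpair.
  have [f [e [k Hf]]] := Dist_octahedral Hpush' (Dist_rot (Dist_bin1 X0 B)) Hs'.
  exact: (tri_sub_Dist_fst trisubN Hf NC (N_sh (X_N XX0))).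
have h'0 := Dist_w0_of_epic Hpush' Hi (bpr1_colpair i s) cov_p XN0.
rewrite {}h'0 in Hpush'; have [sg [rho [_ split_sum rho_retr]]] := Dist_split Hpush'.
exact: (iso_mod_of_split_colpair XX0 XN0 rho_retr split_sum).
Qed.

Lemma frobenius_epic_verdier :
  frobenius_epic_closed X (fun Y => U Y /\ V Y) -> verdier_cond N U X V.
Proof.
move=> [[_ _ Hpull] _ Hfrob] A B C s g h UA VA UB VB NC Hs.
have [U0 [X0 [j [p [q [Hj UVU0 cov_p [_ env_j]]]]]]] := Hfrob B (conj UB VB).
have [N0 [g' [h' [Hpull' [UN0 VN0]]]]] :=
  Hpull _ _ _ _ _ _ Hj (conj UB VB) UVU0 cov_p A s (conj UA VA).
have XX0 := cov_p.1.
have XN0 : X N0.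
  apply/XE; split=> //.
  have Hs' : Dist (rowpair p s \oo bin2) g h by rewrite rowpair_bin2.
  have [f [e [k Hf]]] := Dist_octahedral (Dist_bin2 X0 A) (Dist_rot Hpull') Hs'.
  case: trisubN => _ Nsh Nclosed; apply/Nsh.
  exact: (Nclosed _ _ _ _ _ _ Hf (X_N XX0) NC).
have h'0 := Dist_w0_of_monic Hj Hpull' (rowpair_bin1 p s) env_j XN0.
rewrite {}h'0 in Hpull'; have [sg [rho [sg_sect split_sum _]]] := Dist_split Hpull'.
exact: (iso_mod_of_split_rowpair XX0 XN0 sg_sect split_sum).
Qed.

End Verdier.

Theorem lemma4p2 (T : TriCat) (N U X V : Ob (PT T) -> Prop) :
  tri_sub N -> addsub U -> addsub X -> addsub V ->
  N_loc_triple N U X V ->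
  (frobenius_monic_closed X (fun Y => U Y /\ V Y) -> verdier_cond N U X V) /\
  (frobenius_epic_closed X (fun Y => U Y /\ V Y) -> verdier_cond N U X V).
Proof.
move=> trisubN _ _ _ [_ XE _ _]; split.
- exact: frobenius_monic_verdier.
- exact: frobenius_epic_verdier.
Qed.
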